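(* Let $(F_n)_{n\ge 0}$ be the Fibonacci sequence with $F_0=0$, $F_1=1$, $F_n=F_{n-1}+F_{n-2}$ for $n\ge2$. For every integer $k\in\mathbb{Z}$ (possibly negative) and every integer $m\ge 0$, $$[\underbrace{4,4,\dots,4}_{m},\,2k+3]=\frac{F_{3m+4}+k\,F_{3m+3}}{F_{3m+1}+k\,F_{3m}},$$ where the continued fraction has $m+1$ entries $a_0,\dots,a_m$ with $a_i=4$ for $0\le i<m$ and $a_m=2k+3$.
   Context: For numbers $a_0,a_1,\dots,a_m$, the finite continued fraction $[a_0,a_1,\dots,a_m]$ denotes $a_0+\cfrac{1}{a_1+\cfrac{1}{\ddots+\cfrac{1}{a_m}}}$, evaluated as a rational number; $[a_0]=a_0$. *)

From mathcomp Require Import all_boot all_order all_algebra.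
Set Implicit Arguments. Unset Strict Implicit. Unset Printing Implicit Defensive.
Import Order.TTheory GRing.Theory Num.Theory.
Local Open Scope ring_scope.

Fixpoint fib (n : nat) : nat :=
  match n with
  | 0 => 0
  | 1 => 1
  | (n'.+1 as m).+1 => fib m + fib n'
  end%N.

Fixpoint cf_aux (a : rat) (s : seq rat) : rat :=
  match s with
  | [::] => a
  | b :: s' => a + (cf_aux b s')^-1
  end.

(* finite continued fraction [a_0, ..., a_m] of a nonempty list (0 on [::], unused) *)
Definition contfrac (s : seq rat) : rat :=
  match s with
  | [::] => 0
  | a :: s' => cf_aux a s'
  end.

(** Write [G_n = F_(n+1) + k F_n]; the claim is [[4,...,4,2k+3] = G_(3m+3) / G_(3m)].
    Any such Fibonacci-type sequence satisfies [G_(n+6) = 4 G_(n+3) + G_n], so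
    prepending a 4 maps [G_(3m+3) / G_(3m)] to [4 + G_(3m) / G_(3m+3) = G_(3m+6) / G_(3m+3)],
    and induction on [m] starts from [G_3 / G_0 = 2k + 3].  The only point to check is
    [G_(n+3) <> 0]: since [F_(n+3) < F_(n+4) < 2 F_(n+3)], the ratio [F_(n+4) / F_(n+3)]
    is never an integer. *)

From mathcomp Require Import all_boot all_order all_algebra.
From mathcomp Require Import zify ring.
Set Implicit Arguments.
Unset Strict Implicit.
Unset Printing Implicit Defensive.

Import Order.TTheory GRing.Theory Num.Theory.
Local Open Scope ring_scope.

Lemma fibSS n : fib n.+2 = (fib n.+1 + fib n)%N.
Proof. by []. Qed.

Lemma fib_gt0 n : (0 < fib n.+1)%N.
Proof. by elim: n => // n IHn; rewrite fibSS ltn_addr. Qed.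

Lemma fibS6 n : fib n.+3.+3 = (4 * fib n.+3 + fib n)%N.
Proof. rewrite !fibSS; lia. Qed.

Lemma fib_ratio_bounds n : (fib n.+3 < fib n.+4 < 2 * fib n.+3)%N.
Proof. have := fib_gt0 n; have := fib_gt0 n.+1; rewrite !fibSS; lia. Qed.

Lemma addr_mulz_neq0 (a b k : int) : 0 < b -> b < a < 2 * b -> a + k * b != 0.
Proof.
move=> b_gt0 /andP[lt_ba lt_a2b].
have [k_ge|k_lt] := lerP (-1) k.
  by apply/lt0r_neq0; nia.
by apply/ltr0_neq0; nia.
Qed.

Definition gfib (R : comNzRingType) (k : R) (n : nat) : R :=
  (fib n.+1)%:R + k * (fib n)%:R.

Lemma gfibS6 (R : comNzRingType) (k : R) n :
  gfib k n.+3.+3 = 4 * gfib k n.+3 + gfib k n.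
Proof. by rewrite /gfib !fibS6; ring. Qed.

Lemma gfib_map (R S : comNzRingType) (f : {rmorphism R -> S}) k n :
  f (gfib k n) = gfib (f k) n.
Proof. by rewrite rmorphD rmorphM !rmorph_nat. Qed.

Lemma gfib_neq0 (k : int) n : gfib (k%:~R : rat) n.+3 != 0.
Proof.
rewrite -(gfib_map intr) intr_eq0 addr_mulz_neq0 ?ltr0n ?fib_gt0 //.
by rewrite -natrM !ltr_nat fib_ratio_bounds.
Qed.

Lemma contfrac_cons a s : s != [::] -> contfrac (a :: s) = a + (contfrac s)^-1.
Proof. by case: s. Qed.

Lemma contfrac_nseq4 (k : int) m :
  contfrac (nseq m (4 : rat) ++ [:: (2 * k + 3)%:~R]) =
  gfib k%:~R (3 * m).+3 / gfib k%:~R (3 * m).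
Proof.
elim: m => [|m IHm].
  by rewrite /gfib /= mulr0 addr0 invr1 mulr1 intrD intrM addrC mulrC.
rewrite -[nseq m.+1 _]/(4 :: nseq m 4) cat_cons contfrac_cons; last first.
  by rewrite -size_eq0 size_cat addn1.
by rewrite IHm mulnSr addn3 gfibS6 invf_div [RHS]mulrDl mulfK ?gfib_neq0.
Qed.

Theorem corollary2 (k : int) (m : nat) :
  contfrac (nseq m (4 : rat) ++ [:: ((2 * k + 3)%R)%:~R]) =
  ((fib (3 * m + 4))%:R + k%:~R * (fib (3 * m + 3))%:R) /
  ((fib (3 * m + 1))%:R + k%:~R * (fib (3 * m))%:R).
Proof. by rewrite contfrac_nseq4 /gfib addn1 addn3 addn4. Qed.
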